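(* Let $\beta_1\in(0,1)$, $\beta_0=1-\beta_1$, $\rho\in(0,1)$, $\theta\in(0,1)$, $\lambda\ge 0$, $N_0>0$, and assume $$N_0\le \frac{\lambda(1-\rho)(1-\beta_1\theta)^2}{\rho\,\theta^2}.$$ For $s\in[0,1]$ let $$\bar m_1(s)=\tfrac{\beta_0\beta_1(1-\rho)s}{\rho+\beta_1 s(1-\rho)},\ \bar m_2(s)=\tfrac{\beta_0\rho}{\rho+\beta_1 s(1-\rho)},\ \bar m_3(s)=\tfrac{\beta_1^2(1-\rho)s}{\rho+\beta_1 s(1-\rho)},\ \bar m_4(s)=\tfrac{\beta_1\rho}{\rho+\beta_1 s(1-\rho)},$$ $$E(s)=\frac{\theta N_0\, s}{1-\theta \bar m_4(s)}+\lambda\big(\bar m_2(s)+\bar m_4(s)\big),$$ and define $$N_0^0=\frac{\lambda\beta_1(1-\rho)(1-\theta\beta_1)}{\rho\theta},\qquad N_0^1=\frac{\lambda\beta_1(1-\rho)\rho\,\dfrac{(\rho+\beta_1-\beta_1\rho(1+\theta))^2}{(\beta_1+\rho-\beta_1\rho)^2}}{\theta\big(2\beta_1(1-\rho)\rho(1-\theta\beta_1)+\rho^2(1-\theta\beta_1)+\beta_1^2(1-\rho)^2\big)}.$$ Let $s_4^*$ denote the optimal equilibrium control, i.e. a minimizer of $E$ over $[0,1]$, and $\vec m^*=(\bar m_1(s_4^* ),\dots,\bar m_4(s_4^* ))$. Then: (i) if $N_0\ge N_0^0$, then $s_4^*=0$ and $\vec m^*=(0,\beta_0,0,\beta_1)$;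 (ii) if $N_0\le N_0^1$, then $s_4^*=1$ and $$m_1^*=\tfrac{\beta_0\beta_1(1-\rho)}{\beta_1(1-\rho)+\rho},\ m_2^*=\tfrac{\beta_0\rho}{\rho+\beta_1(1-\rho)},\ m_3^*=\tfrac{\beta_1^2(1-\rho)}{\rho+\beta_1(1-\rho)},\ m_4^*=\tfrac{\beta_1\rho}{\rho+\beta_1(1-\rho)};$$ (iii) if $N_0^1<N_0<N_0^0$, then $s_4^*\in(0,1)$, and with $m_4^*=\bar m_4(s_4^* )$, $$N_0=\frac{\lambda(1-\rho)(m_4^* )^2(1-\theta m_4^* )^2}{\theta\rho\big(\theta m_4^*(m_4^*-2\beta_1)+\beta_1\big)}.$$
   Context: Mean-field model of a dense wireless network with two channel states (BAD with probability $\beta_0$, GOOD with probability $\beta_1$, i.i.d. over slots), packet arrival probability $\rho$ per slot, buffer size one, SINR decoding threshold $\theta<1$, noise power $N_0$, and weight $\lambda$ on queue length. The population is described by the fractions $m_1,\dots,m_4$ of users in states (BAD, empty), (BAD, one packet), (GOOD, empty), (GOOD, one packet). Only users in state (GOOD, one packet) may be scheduled; $s\in[0,1]$ is the fraction of them that transmit. For a constant control $s$, $(\bar m_1(s),\dots,\bar m_4(s))$ is the equilibrium of the fluid dynamics and $E(s)$ the equilibrium average cost. *)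

From Stdlib Require Import Reals.
Open Scope R_scope.

Definition den (b1 rho s : R) : R := rho + b1 * s * (1 - rho).

Definition m1bar (b1 rho s : R) : R := (1 - b1) * b1 * (1 - rho) * s / den b1 rho s.
Definition m2bar (b1 rho s : R) : R := (1 - b1) * rho / den b1 rho s.
Definition m3bar (b1 rho s : R) : R := b1 ^ 2 * (1 - rho) * s / den b1 rho s.
Definition m4bar (b1 rho s : R) : R := b1 * rho / den b1 rho s.

Definition Ecost (b1 rho theta lambda N0 s : R) : R :=
  theta * N0 * s / (1 - theta * m4bar b1 rho s)
  + lambda * (m2bar b1 rho s + m4bar b1 rho s).

Definition N00 (b1 rho theta lambda : R) : R :=
  lambda * b1 * (1 - rho) * (1 - theta * b1) / (rho * theta).

Definition N01 (b1 rho theta lambda : R) : R :=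
  lambda * b1 * (1 - rho) * rho *
    ((rho + b1 - b1 * rho * (1 + theta)) ^ 2 / (b1 + rho - b1 * rho) ^ 2)
  / (theta * (2 * b1 * (1 - rho) * rho * (1 - theta * b1)
              + rho ^ 2 * (1 - theta * b1) + b1 ^ 2 * (1 - rho) ^ 2)).

Definition is_opt_control (b1 rho theta lambda N0 s : R) : Prop :=
  0 <= s <= 1 /\
  forall s', 0 <= s' <= 1 ->
    Ecost b1 rho theta lambda N0 s <= Ecost b1 rho theta lambda N0 s'.

From Stdlib Require Import Reals Lra Psatz.
From Coquelicot Require Import Coquelicot.
Open Scope R_scope.

(* Put m = m4bar s; it decreases from b1 (s = 0) to m4bar 1 (s = 1), and
   b1 E(s) = F(m) := K (b1 - m) / (m (1 - theta m)) + lambda m  with  K = theta N0 rho / (1 - rho).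
   F' has the sign of psi = lambda p^2 - K q, where p(m) = m (1 - theta m) and
   q(m) = theta m^2 - 2 theta b1 m + b1 > 0.  Under the bound on N0, psi crosses zero at most once
   on (0, b1], upwards: psi increases as long as p does, and is positive beyond the peak of p.
   Hence a minimiser of F on [m4bar 1, b1] is b1 when psi(b1) <= 0, i.e. N0 >= N0^0, is m4bar 1
   when psi(m4bar 1) >= 0, i.e. N0 <= N0^1, and otherwise lies strictly inside, at a root of psi;
   solving psi(m) = 0 for N0 gives (iii). *)

Lemma derive_nonneg_at_left_min f a b l :
  derivable_pt_lim f a l -> a < b -> (forall y, a < y <= b -> f a <= f y) -> 0 <= l.
Proof.
  intros Hf Hab Hmin. apply Rnot_lt_le; intros Hl.
  destruct (Hf (- l) ltac:(lra)) as [d Hd].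
  pose proof (Rmin_l d (b - a)); pose proof (Rmin_r d (b - a)).
  pose proof (Rmin_pos d (b - a) (cond_pos d) ltac:(lra)).
  set (h := Rmin d (b - a) / 2) in *.
  assert (Hq : (f (a + h) - f a) / h - l < - l).
  { apply (Rle_lt_trans _ _ _ (Rle_abs _)), Hd; [|rewrite Rabs_pos_eq]; unfold h; lra. }
  assert (Hdiff : f (a + h) - f a = (f (a + h) - f a) / h * h) by (field; unfold h; lra).
  pose proof (Hmin (a + h) ltac:(unfold h; lra)).
  assert (0 < h) by (unfold h; lra).
  nra.
Qed.

Lemma derive_nonpos_at_right_min f a b l :
  derivable_pt_lim f b l -> a < b -> (forall y, a <= y < b -> f b <= f y) -> l <= 0.
Proof.
  intros Hf Hab Hmin. apply Rnot_lt_le; intros Hl.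
  destruct (Hf l Hl) as [d Hd].
  pose proof (Rmin_l d (b - a)); pose proof (Rmin_r d (b - a)).
  pose proof (Rmin_pos d (b - a) (cond_pos d) ltac:(lra)).
  set (h := - (Rmin d (b - a) / 2)) in *.
  assert (Hq : - l < (f (b + h) - f b) / h - l).
  { apply Rabs_def2, Hd; [|rewrite Rabs_left]; unfold h; lra. }
  assert (Hdiff : f (b + h) - f b = (f (b + h) - f b) / h * h) by (field; unfold h; lra).
  pose proof (Hmin (b + h) ltac:(unfold h; lra)).
  assert (h < 0) by (unfold h; lra).
  nra.
Qed.

Definition cost_m4 (K lam b1 th t : R) : R := K * (b1 - t) / (t * (1 - th * t)) + lam * t.
Definition p_m4 (th t : R) : R := t * (1 - th * t).
Definition q_m4 (b1 th t : R) : R := th * t ^ 2 - 2 * th * b1 * t + b1.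
Definition cost_slope (K lam b1 th t : R) : R := lam * p_m4 th t ^ 2 - K * q_m4 b1 th t.

Lemma p_m4_pos th t : 0 < t -> th * t < 1 -> 0 < p_m4 th t.
Proof. intros. unfold p_m4. nra. Qed.

Lemma q_m4_pos b1 th t : 0 < b1 -> 0 < th -> th * b1 < 1 -> 0 < q_m4 b1 th t.
Proof.
  intros. assert (q_m4 b1 th t = th * (t - b1) ^ 2 + b1 * (1 - th * b1)) by (unfold q_m4; ring).
  pose proof (pow2_ge_0 (t - b1)). nra.
Qed.

Lemma cost_m4_derive K lam b1 th t : p_m4 th t <> 0 ->
  derivable_pt_lim (cost_m4 K lam b1 th) t (cost_slope K lam b1 th t / p_m4 th t ^ 2).
Proof.
  unfold p_m4; intros Hp. apply is_derive_Reals. unfold cost_m4.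
  auto_derive.
  - intro E; apply Hp; rewrite <- E; ring.
  - unfold cost_slope, p_m4, q_m4. field. split; intro E; apply Hp; rewrite E; ring.
Qed.

Lemma cost_slope_lt_before_peak K lam b1 th u t :
  0 <= lam -> 0 < K -> 0 < th -> 0 < u < t -> 2 * th * t <= 1 -> t <= b1 ->
  cost_slope K lam b1 th u < cost_slope K lam b1 th t.
Proof.
  intros. unfold cost_slope.
  assert (Ep : p_m4 th t = p_m4 th u + (t - u) * (1 - th * (t + u))) by (unfold p_m4; ring).
  assert (Eq : q_m4 b1 th u = q_m4 b1 th t + th * (t - u) * (2 * b1 - t - u))
    by (unfold q_m4; ring).
  assert (0 < p_m4 th u) by (unfold p_m4; nra).
  assert (0 < th * (t - u)) by nra.
  assert (p_m4 th u <= p_m4 th t) by nra.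
  assert (q_m4 b1 th t < q_m4 b1 th u) by nra.
  assert (p_m4 th u ^ 2 <= p_m4 th t ^ 2) by nra.
  nra.
Qed.

Lemma cost_slope_pos_past_peak K lam b1 th t :
  0 < th < 1 -> 0 < K -> th * K <= lam * (1 - b1 * th) ^ 2 ->
  1 < 2 * th * t -> t <= b1 -> b1 < 1 -> 0 < cost_slope K lam b1 th t.
Proof.
  intros Hth HK HKle Ht Htb Hb.
  (* Beyond the peak 1/(2 th) of p: 4 th q <= 1 and p >= p(b1) = b1 (1 - b1 th), while
     2 th b1 > 1, so 4 th^2 lam p^2 > lam (1 - b1 th)^2 >= th K >= 4 th^2 K q. *)
  assert (Eq : 4 * th * q_m4 b1 th t = 1 + (2 * th * t - 1) * (1 + 2 * th * t - 4 * th * b1))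
    by (unfold q_m4; ring).
  assert (Ep : p_m4 th t = b1 * (1 - b1 * th) + (b1 - t) * (th * (t + b1) - 1))
    by (unfold p_m4; ring).
  assert (th * t <= th * b1) by nra.
  assert (Hq : 4 * th * q_m4 b1 th t <= 1) by nra.
  assert (1 < th * (t + b1)) by nra.
  assert (b1 * (1 - b1 * th) <= p_m4 th t) by nra.
  assert (0 < th * K) by nra.
  assert (Hlam : 0 < lam) by (pose proof (pow2_ge_0 (1 - b1 * th)); nra).
  assert (Hp : (1 - b1 * th) ^ 2 < (2 * th * p_m4 th t) ^ 2).
  { assert (1 < 2 * th * b1) by nra. assert (0 < 1 - b1 * th) by nra.
    assert (1 - b1 * th < 2 * th * p_m4 th t) by nra. nra. }
  assert (th * K * (4 * th * q_m4 b1 th t) <= th * K) by nra.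
  assert (4 * th ^ 2 * cost_slope K lam b1 th t
          = lam * (2 * th * p_m4 th t) ^ 2 - th * K * (4 * th * q_m4 b1 th t))
    by (unfold cost_slope; ring).
  nra.
Qed.

Lemma cost_slope_single_crossing K lam b1 th u t :
  0 <= lam -> 0 < th < 1 -> 0 < K -> th * K <= lam * (1 - b1 * th) ^ 2 -> b1 < 1 ->
  0 < u < t -> t <= b1 -> 0 <= cost_slope K lam b1 th u -> 0 < cost_slope K lam b1 th t.
Proof.
  intros. destruct (Rle_or_lt (2 * th * t) 1).
  - pose proof (cost_slope_lt_before_peak K lam b1 th u t). lra.
  - now apply cost_slope_pos_past_peak.
Qed.

Section ReducedMinimiser.

Variables K lam b1 th m0 x : R.
Hypotheses (Hlam : 0 <= lam) (Hth : 0 < th < 1) (HK : 0 < K)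
  (HKle : th * K <= lam * (1 - b1 * th) ^ 2) (Hb1 : b1 < 1) (Hm0 : 0 < m0 < b1)
  (Hx : m0 <= x <= b1)
  (Hmin : forall m, m0 <= m <= b1 -> cost_m4 K lam b1 th x <= cost_m4 K lam b1 th m).

Let F := cost_m4 K lam b1 th.
Let psi := cost_slope K lam b1 th.

Lemma p_m4_pos_below_b1 t : 0 < t <= b1 -> 0 < p_m4 th t.
Proof. intros. apply p_m4_pos; nra. Qed.

Lemma cost_m4_derive_below_b1 t : 0 < t <= b1 -> derivable_pt_lim F t (psi t / p_m4 th t ^ 2).
Proof. intros. apply cost_m4_derive. pose proof (p_m4_pos_below_b1 t H). lra. Qed.

Lemma cost_slope_nonneg_at_min : x < b1 -> 0 <= psi x.
Proof.
  intros hx. pose proof (p_m4_pos_below_b1 x ltac:(lra)).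
  assert (0 <= psi x / p_m4 th x ^ 2).
  { apply (derive_nonneg_at_left_min F x b1); [apply cost_m4_derive_below_b1; lra | lra |].
    intros y hy. apply Hmin. lra. }
  assert (E : psi x = psi x / p_m4 th x ^ 2 * p_m4 th x ^ 2) by (field; lra).
  rewrite E. apply Rmult_le_pos; [lra | apply pow2_ge_0].
Qed.

Lemma cost_slope_nonpos_at_min : m0 < x -> psi x <= 0.
Proof.
  intros hx. pose proof (p_m4_pos_below_b1 x ltac:(lra)).
  assert (psi x / p_m4 th x ^ 2 <= 0).
  { apply (derive_nonpos_at_right_min F m0 x); [apply cost_m4_derive_below_b1; lra | lra |].
    intros y hy. apply Hmin. lra. }
  assert (E : psi x = psi x / p_m4 th x ^ 2 * p_m4 th x ^ 2) by (field; lra).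
  rewrite E. pose proof (pow2_ge_0 (p_m4 th x)). nra.
Qed.

Lemma argmin_eq_right : psi b1 <= 0 -> x = b1.
Proof.
  intros hb. destruct (Rle_lt_or_eq_dec x b1 (proj2 Hx)) as [hx | hx]; [exfalso | exact hx].
  enough (0 < psi b1) by lra.
  apply (cost_slope_single_crossing K lam b1 th x b1); try lra.
  exact (cost_slope_nonneg_at_min hx).
Qed.

Lemma argmin_eq_left : 0 <= psi m0 -> x = m0.
Proof.
  intros hm. destruct (Rle_lt_or_eq_dec m0 x (proj1 Hx)) as [hx | hx]; [exfalso | now symmetry].
  enough (0 < psi x) by (pose proof (cost_slope_nonpos_at_min hx); lra).
  apply (cost_slope_single_crossing K lam b1 th m0 x); try lra.
  exact hm.
Qed.

Lemma argmin_interior : psi m0 < 0 < psi b1 -> m0 < x < b1 /\ psi x = 0.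
Proof.
  intros [hm hb].
  assert (m0 < x).
  { destruct (Rle_lt_or_eq_dec m0 x (proj1 Hx)) as [hx | hx]; [exact hx | exfalso].
    pose proof (cost_slope_nonneg_at_min ltac:(lra)) as h. rewrite <- hx in h. lra. }
  assert (x < b1).
  { destruct (Rle_lt_or_eq_dec x b1 (proj2 Hx)) as [hx | hx]; [exact hx | exfalso].
    pose proof (cost_slope_nonpos_at_min ltac:(lra)) as h. rewrite hx in h. lra. }
  pose proof cost_slope_nonneg_at_min. pose proof cost_slope_nonpos_at_min. split; lra.
Qed.

End ReducedMinimiser.

Definition control_of_m4 (b1 rho m : R) : R := rho * (b1 - m) / (m * b1 * (1 - rho)).

Section Equilibrium.

Variables b1 rho : R.
Hypotheses (hb1 : 0 < b1 < 1) (hrho : 0 < rho < 1).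

Lemma den_pos s : 0 <= s -> 0 < den b1 rho s.
Proof.
  intros hs. unfold den. assert (0 <= b1 * s * (1 - rho)) by (apply Rmult_le_pos; nra). lra.
Qed.

Lemma m4bar_0 : m4bar b1 rho 0 = b1.
Proof. unfold m4bar, den. field. lra. Qed.

Lemma m4bar_pos s : 0 <= s -> 0 < m4bar b1 rho s.
Proof. intros hs. apply Rdiv_lt_0_compat; [nra | exact (den_pos s hs)]. Qed.

Lemma m4bar_lt s s' : 0 <= s < s' -> m4bar b1 rho s' < m4bar b1 rho s.
Proof.
  intros hs. pose proof (den_pos s ltac:(lra)). pose proof (den_pos s' ltac:(lra)).
  unfold m4bar. apply Rmult_lt_compat_l; [nra|]. apply Rinv_lt_contravar; [nra|].
  assert (0 < b1 * (1 - rho)) by nra. unfold den. nra.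
Qed.

Lemma m4bar_1_bounds : 0 < m4bar b1 rho 1 < b1.
Proof. split; [apply m4bar_pos; lra |]. rewrite <- m4bar_0 at 2. apply m4bar_lt; lra. Qed.

Lemma m4bar_inj s s' : 0 <= s -> 0 <= s' -> m4bar b1 rho s = m4bar b1 rho s' -> s = s'.
Proof.
  intros hs hs' E. destruct (Rtotal_order s s') as [h | [h | h]]; [| exact h |].
  - pose proof (m4bar_lt s s' (conj hs h)). lra.
  - pose proof (m4bar_lt s' s (conj hs' h)). lra.
Qed.

Lemma m4bar_range s : 0 <= s <= 1 -> m4bar b1 rho 1 <= m4bar b1 rho s <= b1.
Proof.
  intros hs. split.
  - destruct (Rle_lt_or_eq_dec s 1 (proj2 hs)) as [h | ->]; [left; apply m4bar_lt | right]; lra.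
  - rewrite <- m4bar_0 at 2.
    destruct (Rle_lt_or_eq_dec 0 s (proj1 hs)) as [h | <-]; [left; apply m4bar_lt | right]; lra.
Qed.

Lemma control_interior_of_m4bar s : 0 <= s <= 1 ->
  m4bar b1 rho 1 < m4bar b1 rho s < b1 -> 0 < s < 1.
Proof.
  intros hs hm. split.
  - destruct (Rle_lt_or_eq_dec 0 s (proj1 hs)) as [h | h]; [exact h |].
    rewrite <- h, m4bar_0 in hm. lra.
  - destruct (Rle_lt_or_eq_dec s 1 (proj2 hs)) as [h | h]; [exact h |].
    rewrite h in hm. lra.
Qed.

Lemma m4bar_control_of_m4 m : 0 < m -> m4bar b1 rho (control_of_m4 b1 rho m) = m.
Proof. intros hm. unfold m4bar, den, control_of_m4. field. repeat split; nra. Qed.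

Lemma control_of_m4_range m :
  m4bar b1 rho 1 <= m <= b1 -> 0 <= control_of_m4 b1 rho m <= 1.
Proof.
  intros hm. pose proof (m4bar_pos 1 ltac:(lra)).
  assert (E1 : m4bar b1 rho 1 * (rho + b1 * (1 - rho)) = b1 * rho).
  { unfold m4bar, den. field. nra. }
  assert (0 < m * b1 * (1 - rho)) by (apply Rmult_lt_0_compat; nra).
  assert (Ec : control_of_m4 b1 rho m * (m * b1 * (1 - rho)) = rho * (b1 - m))
    by (unfold control_of_m4; field; nra).
  assert (b1 * rho <= m * (rho + b1 * (1 - rho))) by nra.
  split; nra.
Qed.

Lemma m_bars_at_0 :
  m1bar b1 rho 0 = 0 /\ m2bar b1 rho 0 = 1 - b1 /\
  m3bar b1 rho 0 = 0 /\ m4bar b1 rho 0 = b1.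
Proof. unfold m1bar, m2bar, m3bar, m4bar, den. repeat split; field; lra. Qed.

Lemma m_bars_at_1 :
  m1bar b1 rho 1 = (1 - b1) * b1 * (1 - rho) / (b1 * (1 - rho) + rho) /\
  m2bar b1 rho 1 = (1 - b1) * rho / (rho + b1 * (1 - rho)) /\
  m3bar b1 rho 1 = b1 ^ 2 * (1 - rho) / (rho + b1 * (1 - rho)) /\
  m4bar b1 rho 1 = b1 * rho / (rho + b1 * (1 - rho)).
Proof.
  assert (0 < rho + b1 * (1 - rho)) by nra.
  unfold m1bar, m2bar, m3bar, m4bar, den. repeat split; field; nra.
Qed.

End Equilibrium.

Definition eff_noise (theta rho N0 : R) : R := theta * N0 * rho / (1 - rho).

Section Cost.

Variables b1 rho theta lambda N0 : R.
Hypotheses (hb1 : 0 < b1 < 1) (hrho : 0 < rho < 1) (htheta : 0 < theta < 1).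

Let K := eff_noise theta rho N0.

Lemma Ecost_as_cost_m4 s : 0 <= s ->
  b1 * Ecost b1 rho theta lambda N0 s = cost_m4 K lambda b1 theta (m4bar b1 rho s).
Proof.
  intros hs. pose proof (den_pos b1 rho hb1 hrho s hs).
  assert (den b1 rho s - theta * b1 * rho <> 0).
  { assert (0 <= b1 * s * (1 - rho)) by (apply Rmult_le_pos; nra).
    assert (theta * b1 < 1) by nra. assert (theta * b1 * rho < rho) by nra.
    unfold den in *. lra. }
  unfold Ecost, cost_m4, m2bar, m4bar, K, eff_noise.
  field_simplify_eq; [unfold den; ring | repeat split; lra].
Qed.

Lemma opt_control_minimizes_cost_m4 s : is_opt_control b1 rho theta lambda N0 s ->
  forall m, m4bar b1 rho 1 <= m <= b1 ->
  cost_m4 K lambda b1 theta (m4bar b1 rho s) <= cost_m4 K lambda b1 theta m.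
Proof.
  intros [hs hmin] m hm.
  pose proof (m4bar_pos b1 rho hb1 hrho 1 ltac:(lra)).
  pose proof (control_of_m4_range b1 rho hb1 hrho m hm) as hc.
  rewrite <- (m4bar_control_of_m4 b1 rho hb1 hrho m) by lra.
  rewrite <- !Ecost_as_cost_m4 by lra.
  apply Rmult_le_compat_l; [lra | exact (hmin _ hc)].
Qed.

Lemma eff_noise_pos : 0 < N0 -> 0 < K.
Proof.
  intros. unfold K, eff_noise. apply Rdiv_lt_0_compat; [|lra].
  apply Rmult_lt_0_compat; [apply Rmult_lt_0_compat |]; lra.
Qed.

Lemma eff_noise_le :
  N0 <= lambda * (1 - rho) * (1 - b1 * theta) ^ 2 / (rho * theta ^ 2) ->
  theta * K <= lambda * (1 - b1 * theta) ^ 2.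
Proof.
  intros hN. set (c := theta ^ 2 * rho / (1 - rho)).
  assert (0 < c).
  { apply Rdiv_lt_0_compat; [apply Rmult_lt_0_compat; [apply pow_lt |] |]; lra. }
  replace (theta * K) with (c * N0) by (unfold c, K, eff_noise; field; lra).
  replace (lambda * (1 - b1 * theta) ^ 2)
    with (c * (lambda * (1 - rho) * (1 - b1 * theta) ^ 2 / (rho * theta ^ 2)))
    by (unfold c; field; lra).
  apply Rmult_le_compat_l; lra.
Qed.

Lemma cost_slope_at_b1_sign :
  (N00 b1 rho theta lambda <= N0 -> cost_slope K lambda b1 theta b1 <= 0) /\
  (N0 < N00 b1 rho theta lambda -> 0 < cost_slope K lambda b1 theta b1).
Proof.
  assert (E : cost_slope K lambda b1 theta b1
              = p_m4 theta b1 * (theta * rho / (1 - rho)) * (N00 b1 rho theta lambda - N0))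
    by (unfold cost_slope, p_m4, q_m4, K, eff_noise, N00; field; lra).
  assert (0 < p_m4 theta b1 * (theta * rho / (1 - rho))).
  { apply Rmult_lt_0_compat; [apply p_m4_pos | apply Rdiv_lt_0_compat]; nra. }
  rewrite E. split; intros; nra.
Qed.

Lemma cost_slope_at_m4bar_1_sign :
  (N0 <= N01 b1 rho theta lambda -> 0 <= cost_slope K lambda b1 theta (m4bar b1 rho 1)) /\
  (N01 b1 rho theta lambda < N0 -> cost_slope K lambda b1 theta (m4bar b1 rho 1) < 0).
Proof.
  assert (0 < b1 * (1 - rho)) by nra.
  assert (0 < 1 - theta * b1) by nra.
  assert (0 < 2 * b1 * (1 - rho) * rho * (1 - theta * b1)
              + rho ^ 2 * (1 - theta * b1) + b1 ^ 2 * (1 - rho) ^ 2).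
  { assert (0 < rho ^ 2 * (1 - theta * b1)) by (apply Rmult_lt_0_compat; nra).
    assert (0 <= 2 * b1 * (1 - rho) * rho * (1 - theta * b1)) by nra.
    assert (0 <= b1 ^ 2 * (1 - rho) ^ 2) by (apply Rmult_le_pos; apply pow2_ge_0).
    lra. }
  set (m0 := m4bar b1 rho 1).
  assert (E : cost_slope K lambda b1 theta m0
              = theta * rho * q_m4 b1 theta m0 / (1 - rho) * (N01 b1 rho theta lambda - N0)).
  { unfold cost_slope, p_m4, q_m4, K, eff_noise, N01, m0, m4bar, den. field. repeat split; nra. }
  assert (0 < theta * rho * q_m4 b1 theta m0 / (1 - rho)).
  { apply Rdiv_lt_0_compat; [|lra]. apply Rmult_lt_0_compat; [nra | apply q_m4_pos; nra]. }
  rewrite E. split; intros; nra.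
Qed.

Lemma N0_of_cost_slope_root m : cost_slope K lambda b1 theta m = 0 ->
  N0 = lambda * (1 - rho) * m ^ 2 * (1 - theta * m) ^ 2
       / (theta * rho * (theta * m * (m - 2 * b1) + b1)).
Proof.
  intros h. assert (0 < q_m4 b1 theta m) by (apply q_m4_pos; nra).
  replace (theta * m * (m - 2 * b1) + b1) with (q_m4 b1 theta m) by (unfold q_m4; ring).
  assert (E : lambda * (1 - rho) * m ^ 2 * (1 - theta * m) ^ 2
              = N0 * (theta * rho * q_m4 b1 theta m) + (1 - rho) * cost_slope K lambda b1 theta m)
    by (unfold cost_slope, p_m4, K, eff_noise; field; lra).
  rewrite E, h. field. split; [nra | lra].
Qed.

End Cost.

Theorem proposition4 (b1 rho theta lambda N0 : R)
  (hb1 : 0 < b1 < 1) (hrho : 0 < rho < 1) (htheta : 0 < theta < 1)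
  (hlambda : 0 <= lambda) (hN0 : 0 < N0)
  (hN0le : N0 <= lambda * (1 - rho) * (1 - b1 * theta) ^ 2 / (rho * theta ^ 2))
  (s : R) (hs : is_opt_control b1 rho theta lambda N0 s) :
  (N00 b1 rho theta lambda <= N0 ->
     s = 0 /\ m1bar b1 rho s = 0 /\ m2bar b1 rho s = 1 - b1 /\
     m3bar b1 rho s = 0 /\ m4bar b1 rho s = b1) /\
  (N0 <= N01 b1 rho theta lambda ->
     s = 1 /\
     m1bar b1 rho s = (1 - b1) * b1 * (1 - rho) / (b1 * (1 - rho) + rho) /\
     m2bar b1 rho s = (1 - b1) * rho / (rho + b1 * (1 - rho)) /\
     m3bar b1 rho s = b1 ^ 2 * (1 - rho) / (rho + b1 * (1 - rho)) /\
     m4bar b1 rho s = b1 * rho / (rho + b1 * (1 - rho))) /\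
  (N01 b1 rho theta lambda < N0 < N00 b1 rho theta lambda ->
     0 < s < 1 /\
     N0 = lambda * (1 - rho) * (m4bar b1 rho s) ^ 2 * (1 - theta * m4bar b1 rho s) ^ 2
          / (theta * rho * (theta * m4bar b1 rho s * (m4bar b1 rho s - 2 * b1) + b1))).
Proof.
  pose proof hs as [hs01 _].
  pose proof (eff_noise_pos rho theta N0 hrho htheta hN0) as hK.
  pose proof (eff_noise_le b1 rho theta lambda N0 hrho htheta hN0le) as hKle.
  pose proof (m4bar_1_bounds b1 rho hb1 hrho) as hm0.
  pose proof (m4bar_range b1 rho hb1 hrho s hs01) as hx.
  pose proof (opt_control_minimizes_cost_m4 b1 rho theta lambda N0 hb1 hrho htheta s hs) as hmin.
  destruct (cost_slope_at_b1_sign b1 rho theta lambda N0 hb1 hrho htheta) as [hb_nonpos hb_pos].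
  destruct (cost_slope_at_m4bar_1_sign b1 rho theta lambda N0 hb1 hrho htheta)
    as [hm_nonneg hm_neg].
  split; [|split].
  - intros hN. assert (s = 0) as ->.
    { apply (m4bar_inj b1 rho hb1 hrho); try lra. rewrite (m4bar_0 b1 rho hrho).
      eapply argmin_eq_right; eauto; lra. }
    split; [reflexivity | exact (m_bars_at_0 b1 rho hrho)].
  - intros hN. assert (s = 1) as ->.
    { apply (m4bar_inj b1 rho hb1 hrho); try lra. eapply argmin_eq_left; eauto; lra. }
    split; [reflexivity | exact (m_bars_at_1 b1 rho hb1 hrho)].
  - intros [hN01 hN00].
    destruct (argmin_interior (eff_noise theta rho N0) lambda b1 theta (m4bar b1 rho 1)
                (m4bar b1 rho s)) as [hint hroot]; auto; try lra.
    split; [exact (control_interior_of_m4bar b1 rho hrho s hs01 hint) |].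
    exact (N0_of_cost_slope_root b1 rho theta lambda N0 hb1 hrho htheta _ hroot).
Qed.
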